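(* Let $p$ be an odd prime and $m=p-1$. Let $O$ be either $\tilde D_b$ or $\tilde E_b$ for any $b\in\{0,1,\ldots,p-1\}$ (an $m\times m$ sequence design). Then: (i) $O$ is a Latin square, i.e., every row and every column of $O$ is a permutation of $\{1,\ldots,m\}$; (ii) $O$ is pair-balanced with $t_{i,j}=1$ for all $1\le i\ne j\le m$; (iii) $d_H(O)=m$.
   Context: Let $p$ be an odd prime, $m=p-1$, $h=(1,\ldots,m)$. The good lattice point set $D_0$ is the $p\times m$ matrix whose $i$th row is $i\,h \pmod p$, $i=1,\ldots,p$ (so its last row is $(0,\ldots,0)$). The Williams transformation $W:\{0,\ldots,p-1\}\to\{0,\ldots,p-1\}$ is $W(x)=2x$ for $0\le x<p/2$ and $W(x)=2(p-x)-1$ for $p/2\le x\le p-1$. For $b\in\{0,\ldots,p-1\}$, $D_b=D_0+b\pmod p$ entrywise (last row $(b,\ldots,b)$) and $E_b=W(D_b)$ entrywise (last row $(W(b),\ldots,W(b))$). The leave-one-out design $\tilde D_b$ is obtained from $D_b$ by deleting its last row and replacing each entry $x$ by $x+1$ if $x<b$ and leaving it as $x$ if $x>b$; $\tilde E_b$ is obtained from $E_b$ by deleting its last row and replacing each entry $x$ by $x+1$ if $x<W(b)$ and by $x$ if $x>W(b)$. Both are $m\times m$ matrices with entries in $\{1,\ldots,m\}$. A sequence design is a matrix each of whose rows is a permutation of $\{1,\ldots,m\}$. For $i\ne j$, $t_{i,j}$ is the number of times component $i$ is immediately followed by component $j$ (i.e., the number of pairs (row $r$, position $s$) with $O_{rs}=i$,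 $O_{r,s+1}=j$). $O$ is pair-balanced if all $t_{i,j}$, $i\ne j$, are equal. $d_H(o_i,o_j)=\#\{k:o_{ik}\ne o_{jk}\}$ and $d_H(O)$ is the minimum over distinct row pairs. *)

From mathcomp Require Import all_boot.
Set Implicit Arguments. Unset Strict Implicit. Unset Printing Implicit Defensive.

(* A design with m rows and m columns is represented as a function
   O : nat -> nat -> nat ; O r s is the entry in row r (0 <= r < m),
   position s (0 <= s < m).  Rows/positions are 0-based here. *)

Definition W (p x : nat) : nat :=
  if 2 * x < p then 2 * x else 2 * (p - x) - 1.

Definition Db (p b i k : nat) : nat := (i * k + b) %% p.

Definition Eb (p b i k : nat) : nat := W p (Db p b i k).

(* Leave-one-out relabelling with respect to the value c (deleted last row
   has constant value c): x -> x+1 if x < c, x otherwise. *)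
Definition loo (c x : nat) : nat := if x < c then x.+1 else x.

(* tilde D_b : rows 1..m of D_b (row index r = i-1, position s = k-1). *)
Definition Dtilde (p b : nat) : nat -> nat -> nat :=
  fun r s => loo b (Db p b r.+1 s.+1).

(* tilde E_b : rows 1..m of E_b relabelled w.r.t. W(b). *)
Definition Etilde (p b : nat) : nat -> nat -> nat :=
  fun r s => loo (W p b) (Eb p b r.+1 s.+1).

Definition latin_square (O : nat -> nat -> nat) (m : nat) : Prop :=
  (forall r, r < m -> perm_eq [seq O r s | s <- iota 0 m] (iota 1 m)) /\
  (forall s, s < m -> perm_eq [seq O r s | r <- iota 0 m] (iota 1 m)).

Definition tcount (O : nat -> nat -> nat) (m i j : nat) : nat :=
  \sum_(r < m) \sum_(s < m.-1) ((O r s == i) && (O r s.+1 == j)).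

Definition pair_balanced (O : nat -> nat -> nat) (m : nat) : Prop :=
  forall i j i' j', 0 < i <= m -> 0 < j <= m -> 0 < i' <= m -> 0 < j' <= m ->
    i != j -> i' != j' -> tcount O m i j = tcount O m i' j'.

Definition dH (O : nat -> nat -> nat) (m r1 r2 : nat) : nat :=
  \sum_(k < m) (O r1 k != O r2 k).

(* Minimum Hamming distance over distinct row pairs (every dH is <= m,
   so the neutral element m of minn does not affect the minimum when
   there are at least two rows). *)
Definition dH_min (O : nat -> nat -> nat) (m : nat) : nat :=
  \big[minn/m]_(r1 < m) \big[minn/m]_(r2 < m | r1 != r2) dH O m r1 r2.

(* Row i of D_b lists the values i k + b (k = 1, ..., p-1) of a line of
   nonzero slope through b over F_p.  Hence every row and every column meets
   each residue other than b exactly once, and two distinct residues u, w <> b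
   occur as consecutive entries u = a t + b, w = a (t + 1) + b for exactly one
   slope a = w - u and position t = (u - b) / (w - u), which avoids 0 and -1.
   Both designs arise from D_b by a relabelling that maps the residues other
   than b bijectively onto 1, ..., p-1 (leave-one-out, preceded by the
   Williams permutation for E_b), and all three properties survive any such
   relabelling. *)

From mathcomp Require Import all_boot all_algebra zify ring.
Import GRing.Theory.

Set Implicit Arguments.
Unset Strict Implicit.
Unset Printing Implicit Defensive.

Lemma perm_iota_map_inj (lo m : nat) (f : nat -> nat) :
  (forall s, s < m -> lo <= f s < lo + m) ->
  {in iota 0 m &, injective f} ->
  perm_eq [seq f s | s <- iota 0 m] (iota lo m).
Proof.
move=> f_range f_inj.
have uniq_f : uniq [seq f s | s <- iota 0 m] by rewrite map_inj_in_uniq ?iota_uniq.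
have sub : {subset [seq f s | s <- iota 0 m] <= iota lo m}.
  move=> x /mapP [s]; rewrite mem_iota add0n /= => /f_range f_s ->.
  by rewrite mem_iota.
have le_size : size (iota lo m) <= size [seq f s | s <- iota 0 m].
  by rewrite size_map !size_iota.
have [_ eq_f] := uniq_min_size uniq_f sub le_size.
exact: uniq_perm uniq_f (iota_uniq lo m) eq_f.
Qed.

Lemma uniq_map_inj_in (T1 T2 : eqType) (f : T1 -> T2) (s : seq T1) :
  uniq (map f s) -> {in s &, injective f}.
Proof.
elim: s => //= a s IH /andP [fa_notin /IH f_inj] x y.
rewrite !inE => /predU1P [-> | xs] /predU1P [-> | ys] // fxy.
- by move: fa_notin; rewrite fxy map_f.
- by move: fa_notin; rewrite -fxy map_f.
- exact: f_inj.
Qed.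

Lemma tcount_eq1 (O : nat -> nat -> nat) (m i j r0 s0 : nat) :
  r0 < m -> s0 < m.-1 ->
  (forall r s, r < m -> s < m.-1 ->
     (O r s == i) && (O r s.+1 == j) = (r == r0) && (s == s0)) ->
  tcount O m i j = 1.
Proof.
move=> r0_lt s0_lt O_ij.
rewrite /tcount (bigD1 (Ordinal r0_lt)) //= (bigD1 (Ordinal s0_lt)) //= O_ij // !eqxx.
rewrite big1 => [|s s_ne0]; last first.
  by rewrite O_ij // eqxx; move: s_ne0; rewrite -val_eqE /= => /negbTE ->.
rewrite big1 // => r r_ne0; apply: big1 => s _.
by rewrite O_ij //; move: r_ne0; rewrite -val_eqE /= => /negbTE ->.
Qed.

Lemma dH_min_full (O : nat -> nat -> nat) (m : nat) :
  (forall r1 r2 k, r1 < m -> r2 < m -> k < m -> r1 != r2 -> O r1 k != O r2 k) ->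
  dH_min O m = m.
Proof.
move=> O_col.
have dH_full (r1 r2 : 'I_m) : r1 != r2 -> dH O m r1 r2 = m.
  move=> r12; rewrite /dH (eq_bigr (fun _ => 1)) ?sum1_card ?card_ord // => k _.
  by rewrite O_col.
rewrite /dH_min; apply: (big_ind (eq^~ m)) => [|x y -> ->|r1 _]; rewrite ?minnn //.
by apply: (big_ind (eq^~ m)) => [|x y -> ->|r2 /dH_full]; rewrite ?minnn.
Qed.

Lemma loo_filter_iota (c k : nat) :
  [seq loo c x | x <- iota 0 (c + k.+1) & x != c] = iota 1 (c + k).
Proof.
rewrite iotaD add0n filter_cat map_cat /= eqxx /= [iota 1 _]iotaD add1n.
have lt_c : {in iota 0 c, forall x, x < c} by move=> x; rewrite mem_iota.
have gt_c : {in iota c.+1 k, forall x, c < x} by move=> x; rewrite mem_iota; case/andP.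
congr (_ ++ _).
  rewrite (@eq_in_filter _ _ predT) ?filter_predT => [|x /lt_c]; last first.
    by rewrite ltn_neqAle => /andP [].
  have /eq_in_map -> : {in iota 0 c, loo c =1 addn 1}.
    by move=> x /lt_c x_lt; rewrite /loo x_lt add1n.
  by rewrite (iotaDl 1 0).
rewrite (@eq_in_filter _ _ predT) ?filter_predT => [|x /gt_c]; last first.
  by rewrite ltn_neqAle eq_sym => /andP [].
have /eq_in_map -> : {in iota c.+1 k, loo c =1 id}.
  by move=> x /gt_c c_lt; rewrite /loo ltnNge ltnW.
by rewrite map_id.
Qed.

Definition relabelling (p b : nat) (g : nat -> nat) : Prop :=
  perm_eq [seq g x | x <- iota 0 p & x != b] (iota 1 p.-1).

Lemma relabelling_loo (p b : nat) : b < p -> relabelling p b (loo b).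
Proof.
move=> b_lt; have [k ->] : exists k, p = b + k.+1 by exists (p - b.+1); lia.
by rewrite /relabelling loo_filter_iota addnS.
Qed.

Lemma relabelling_comp (p b : nat) (phi g : nat -> nat) :
  (forall x, x < p -> phi x < p) -> {in iota 0 p &, injective phi} ->
  relabelling p (phi b) g -> b < p -> relabelling p b (g \o phi).
Proof.
move=> phi_lt phi_inj g_rel b_lt.
have phi_perm : perm_eq [seq phi x | x <- iota 0 p] (iota 0 p).
  by apply: perm_iota_map_inj => // x /phi_lt.
have phi_neq : {in iota 0 p, forall x, (phi x != phi b) = (x != b)}.
  by move=> x x_lt; rewrite (inj_in_eq phi_inj) // mem_iota.
rewrite /relabelling (map_comp g phi).
have -> : [seq phi x | x <- iota 0 p & x != b] =
          [seq y <- [seq phi x | x <- iota 0 p] | y != phi b].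
  by rewrite filter_map (eq_in_filter phi_neq).
exact: perm_trans (perm_map g (perm_filter _ phi_perm)) g_rel.
Qed.

Lemma W_lt (p x : nat) : x < p -> W p x < p.
Proof. by rewrite /W; case: (ltnP (2 * x) p); lia. Qed.

Lemma W_inj (p : nat) : {in iota 0 p &, injective (W p)}.
Proof.
move=> x y; rewrite !mem_iota /W.
by case: (ltnP (2 * x) p); case: (ltnP (2 * y) p); lia.
Qed.

Section Relabelling.
Variables (p b : nat) (g : nat -> nat).
Hypothesis g_rel : relabelling p b g.

Lemma relabelling_range x : x < p -> x != b -> 0 < g x <= p.-1.
Proof.
move=> x_lt xb; have : g x \in iota 1 p.-1.
  by rewrite -(perm_mem g_rel) map_f // mem_filter xb mem_iota.
by rewrite mem_iota add1n ltnS.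
Qed.

Lemma relabelling_inj x y : x < p -> y < p -> x != b -> y != b -> g x = g y -> x = y.
Proof.
move=> x_lt y_lt xb yb; apply: (@uniq_map_inj_in _ _ g [seq x <- iota 0 p | x != b]).
- by rewrite (perm_uniq g_rel) iota_uniq.
- by rewrite mem_filter xb mem_iota.
- by rewrite mem_filter yb mem_iota.
Qed.

Lemma relabelling_surj i : 0 < i <= p.-1 -> exists2 x, (x < p) && (x != b) & g x = i.
Proof.
move=> i_range; have : i \in [seq g x | x <- iota 0 p & x != b].
  by rewrite (perm_mem g_rel) mem_iota; lia.
by case/mapP => x; rewrite mem_filter mem_iota andbC => x_dom ->; exists x.
Qed.

End Relabelling.

Section ModularLines.
Local Open Scope ring_scope.

Lemma line_step_exists (F : fieldType) (b u w : F) :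
  u != b -> w != b -> u != w ->
  exists a t, [/\ a != 0, t != 0, t + 1 != 0, u = a * t + b & w = a * (t + 1) + b].
Proof.
move=> ub wb uw; have wu_nz : w - u != 0 by rewrite subr_eq0 eq_sym.
exists (w - u), ((u - b) / (w - u)); split => //.
- by rewrite mulf_eq0 negb_or invr_eq0 subr_eq0 ub.
- have -> : (u - b) / (w - u) + 1 = (w - b) / (w - u) by field.
  by rewrite mulf_eq0 negb_or invr_eq0 subr_eq0 wb.
- by field.
- by field.
Qed.

Variables (p b : nat).
Hypotheses (p_prime : prime p) (b_lt : (b < p)%N).

Lemma natFp_inj (x y : nat) :
  (x < p)%N -> (y < p)%N -> x%:R = y%:R :> 'F_p -> x = y.
Proof.
move=> x_lt y_lt xy.
by rewrite -(modn_small x_lt) -(modn_small y_lt) -!val_Fp_nat // xy.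
Qed.

Lemma natFp_neq0 (x : nat) : (0 < x < p)%N -> x%:R != 0 :> 'F_p.
Proof.
case/andP=> x_gt0 x_lt; apply: contraTneq x_gt0 => x0.
by rewrite (natFp_inj x_lt (prime_gt0 p_prime) x0).
Qed.

Lemma natFp_neq (x y : nat) : (x < p)%N -> (y < p)%N -> x != y -> x%:R != y%:R :> 'F_p.
Proof. by move=> x_lt y_lt; apply: contra => /eqP /(natFp_inj x_lt y_lt) ->. Qed.

Lemma Fp_val_lt (a : 'F_p) : (val a < p)%N.
Proof. by rewrite -[X in (_ < X)%N](Fp_cast p_prime) ltn_ord. Qed.

Lemma Fp_val_gt0 (a : 'F_p) : a != 0 -> (0 < val a)%N.
Proof. by rewrite lt0n; apply: contraNneq => a0; rewrite -(natr_Zp a) a0. Qed.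

Lemma Db_lt (i k : nat) : (Db p b i k < p)%N.
Proof. by rewrite ltn_pmod ?prime_gt0. Qed.

Lemma Db_Fp (i k : nat) : (Db p b i k)%:R = i%:R * k%:R + b%:R :> 'F_p.
Proof. by rewrite Fp_nat_mod // natrD natrM. Qed.

Lemma Db_eq (i k i' k' : nat) :
  (Db p b i k == Db p b i' k') = (i%:R * k%:R == i'%:R * k'%:R :> 'F_p).
Proof.
apply/eqP/eqP => [/(congr1 (fun n => n%:R : 'F_p))|E].
  by rewrite !Db_Fp => /addIr.
by apply: natFp_inj; rewrite ?Db_lt // !Db_Fp E.
Qed.

Lemma Db_neq_b (i k : nat) : (0 < i < p)%N -> (0 < k < p)%N -> Db p b i k != b.
Proof.
move=> /natFp_neq0 i_nz /natFp_neq0 k_nz.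
apply/eqP => /(congr1 (fun n => n%:R : 'F_p)); rewrite Db_Fp => /eqP.
by rewrite -subr_eq0 addrK mulf_eq0 (negbTE i_nz) (negbTE k_nz).
Qed.

Lemma Db_inj_k (i k k' : nat) : (0 < i < p)%N -> (k < p)%N -> (k' < p)%N ->
  Db p b i k = Db p b i k' -> k = k'.
Proof.
move=> /natFp_neq0 i_nz k_lt k'_lt /eqP.
by rewrite Db_eq => /eqP /(mulfI i_nz) /(natFp_inj k_lt k'_lt).
Qed.

Lemma Db_inj_i (i i' k : nat) : (0 < k < p)%N -> (i < p)%N -> (i' < p)%N ->
  Db p b i k = Db p b i' k -> i = i'.
Proof.
move=> /natFp_neq0 k_nz i_lt i'_lt /eqP.
by rewrite Db_eq => /eqP /(mulIf k_nz) /(natFp_inj i_lt i'_lt).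
Qed.

Lemma Db_step_inj (i i' k k' : nat) :
  (0 < i < p)%N -> (i' < p)%N -> (k < p)%N -> (k' < p)%N ->
  Db p b i k = Db p b i' k' -> Db p b i k.+1 = Db p b i' k'.+1 -> i = i' /\ k = k'.
Proof.
move=> i_unit i'_lt k_lt k'_lt E /eqP; rewrite Db_eq !mulrSr !mulrDr !mulr1.
have /eqP := E; rewrite Db_eq => /eqP ->.
have i_lt : (i < p)%N by case/andP: i_unit.
move=> /eqP /addrI /(natFp_inj i_lt i'_lt) ii'; subst i'.
by split => //; apply: (Db_inj_k i_unit k_lt k'_lt E).
Qed.

Lemma Db_step_exists (u w : nat) :
  (u < p)%N -> (w < p)%N -> u != b -> w != b -> u != w ->
  exists i k, [/\ (0 < i < p)%N, (0 < k)%N, (k.+1 < p)%N,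
                   Db p b i k = u & Db p b i k.+1 = w].
Proof.
move=> u_lt w_lt ub wb uw.
have [a [t [a_nz t_nz t1_nz uE wE]]] := line_step_exists
  (natFp_neq u_lt b_lt ub) (natFp_neq w_lt b_lt wb) (natFp_neq u_lt w_lt uw).
have tS : ((val t).+1)%:R = t + 1 :> 'F_p by rewrite mulrSr natr_Zp.
exists (val a), (val t); split.
- by rewrite Fp_val_gt0 ?Fp_val_lt.
- exact: Fp_val_gt0.
- rewrite ltn_neqAle Fp_val_lt andbT; apply: contra t1_nz => /eqP tp.
  by rewrite -tS tp pchar_Fp_0.
- by apply: natFp_inj; rewrite ?Db_lt // Db_Fp !natr_Zp uE.
- by apply: natFp_inj; rewrite ?Db_lt // Db_Fp tS natr_Zp wE.
Qed.

End ModularLines.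

Section RelabelledLatticeDesign.
Variables (p b : nat) (g : nat -> nat).
Hypotheses (p_prime : prime p) (b_lt : b < p) (g_rel : relabelling p b g).

Let O r s := g (Db p b r.+1 s.+1).

Let index_unit r : r < p.-1 -> 0 < r.+1 < p.
Proof. lia. Qed.

Let index_lt r : r < p.-1 -> r.+1 < p.
Proof. lia. Qed.

Let entry_dom r s : r < p.-1 -> s < p.-1 -> Db p b r.+1 s.+1 != b.
Proof. by move=> /index_unit r_unit /index_unit s_unit; apply: Db_neq_b. Qed.

Lemma relabelled_range r s : r < p.-1 -> s < p.-1 -> 0 < O r s <= p.-1.
Proof. by move=> r_lt s_lt; apply: (relabelling_range g_rel); rewrite ?Db_lt ?entry_dom. Qed.

Lemma relabelled_entry_inj r s r' s' : r < p.-1 -> s < p.-1 -> r' < p.-1 -> s' < p.-1 ->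
  O r s = O r' s' -> Db p b r.+1 s.+1 = Db p b r'.+1 s'.+1.
Proof. by move=> *; apply: (relabelling_inj g_rel); rewrite ?Db_lt ?entry_dom. Qed.

Lemma relabelled_eq r s x : r < p.-1 -> s < p.-1 -> x < p -> x != b ->
  (O r s == g x) = (Db p b r.+1 s.+1 == x).
Proof.
move=> r_lt s_lt x_lt xb; apply/eqP/eqP => [|E]; last by rewrite /O E.
by apply: (relabelling_inj g_rel); rewrite ?Db_lt ?entry_dom.
Qed.

Lemma relabelled_row_inj r : r < p.-1 -> {in iota 0 p.-1 &, injective (O r)}.
Proof.
move=> r_lt s s'; rewrite !mem_iota add0n => s_lt s'_lt.
move=> /(relabelled_entry_inj r_lt s_lt r_lt s'_lt) E.
by have [] := Db_inj_k p_prime (index_unit r_lt) (index_lt s_lt) (index_lt s'_lt) E.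
Qed.

Lemma relabelled_col_inj s : s < p.-1 -> {in iota 0 p.-1 &, injective (O^~ s)}.
Proof.
move=> s_lt r r'; rewrite !mem_iota add0n => r_lt r'_lt.
move=> /(relabelled_entry_inj r_lt s_lt r'_lt s_lt) E.
by have [] := Db_inj_i p_prime (index_unit s_lt) (index_lt r_lt) (index_lt r'_lt) E.
Qed.

Lemma relabelled_latin_square : latin_square O p.-1.
Proof.
have range r s : r < p.-1 -> s < p.-1 -> 1 <= O r s < 1 + p.-1.
  by move=> r_lt s_lt; rewrite add1n ltnS relabelled_range.
split=> [r r_lt | s s_lt]; apply: perm_iota_map_inj => [t t_lt | ]; rewrite ?range //.
- exact: relabelled_row_inj.
- exact: relabelled_col_inj.
Qed.

Lemma relabelled_tcount i j : 0 < i <= p.-1 -> 0 < j <= p.-1 -> i != j ->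
  tcount O p.-1 i j = 1.
Proof.
move=> /(relabelling_surj g_rel) [u /andP [u_lt ub] <-].
move=> /(relabelling_surj g_rel) [w /andP [w_lt wb] <-] gugw.
have uw : u != w by apply: contraNneq gugw => ->.
have [a [t [a_unit t_gt0 t_lt Du Dw]]] := Db_step_exists p_prime b_lt u_lt w_lt ub wb uw.
have [a_gt0 a_lt] := andP a_unit.
apply: (@tcount_eq1 _ _ _ _ a.-1 t.-1); [lia | lia | move=> r s r_lt s_lt].
have [s_lt1 s1_lt] : s < p.-1 /\ s.+1 < p.-1 by lia.
have [s_lt' t_lt'] : s.+1 < p /\ t < p by lia.
rewrite !relabelled_eq //; apply/andP/andP => [[/eqP Drs /eqP Drs1] | [/eqP -> /eqP ->]].
  have Drs_eq : Db p b r.+1 s.+1 = Db p b a t by rewrite Drs Du.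
  have Drs1_eq : Db p b r.+1 s.+2 = Db p b a t.+1 by rewrite Drs1 Dw.
  have [<- <-] := Db_step_inj p_prime (index_unit r_lt) a_lt s_lt' t_lt' Drs_eq Drs1_eq.
  by rewrite !eqxx.
by rewrite !prednK ?Du ?Dw.
Qed.

Lemma relabelled_dH_min : dH_min O p.-1 = p.-1.
Proof.
apply: dH_min_full => r1 r2 s r1_lt r2_lt s_lt; apply: contra => /eqP.
move=> /(relabelled_entry_inj r1_lt s_lt r2_lt s_lt) E.
by have [->] := Db_inj_i p_prime (index_unit s_lt) (index_lt r1_lt) (index_lt r2_lt) E.
Qed.

End RelabelledLatticeDesign.

Theorem theorem1 (p b : nat) (O : nat -> nat -> nat) :
  prime p -> odd p -> b < p ->
  (O = Dtilde p b \/ O = Etilde p b) ->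
  [/\ latin_square O p.-1,
      pair_balanced O p.-1,
      (forall i j, 0 < i <= p.-1 -> 0 < j <= p.-1 -> i != j ->
         tcount O p.-1 i j = 1)
    & dH_min O p.-1 = p.-1].
Proof.
(* W permutes [0, p) for every p. *)
move=> p_prime _ b_lt O_def.
have [g g_rel ->] : exists2 g, relabelling p b g & O = fun r s => g (Db p b r.+1 s.+1).
  case: O_def => ->; [exists (loo b) | exists (loo (W p b) \o W p)] => //.
    exact: relabelling_loo.
  by apply: relabelling_comp => //; [exact: W_lt | exact: W_inj | exact/relabelling_loo/W_lt].
have tcount1 := relabelled_tcount p_prime b_lt g_rel.
split=> //; first exact: relabelled_latin_square.
  by move=> i j i' j' *; rewrite !tcount1.
exact: relabelled_dH_min.
Qed.
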